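(* The decision problem Maximum Matching cannot be expressed by an ESO universal Horn sentence, even assuming that the input structures come with a successor relation.
   Context: Maximum Matching: given a finite undirected graph $G=(V,E)$ with no self-loops and at most one edge between any pair of vertices, together with a non-negative integer $K$ (part of the input, varying from instance to instance, with $K \le |V|$), decide whether there is a matching $F \subseteq E$ (a set of pairwise vertex-disjoint edges) with $|F| \ge K$. Instances are given as finite structures over an input vocabulary containing the edge relation, a representation of $K$, and a successor relation (the successor relation of a linear order on the universe). ESO universal Horn logic consists of sentences $\exists S_1 \cdots \exists S_m\, \forall \bar{x}\, \psi$, with $S_i$ second-order relation variables and $\psi$ a quantifier-free conjunction of clauses, each containing at most one positive occurrence of an atom built from the quantified relations $S_i$ (literals over the input vocabulary are unrestricted). A problem is expressed by such a sentence if an input structure is a yes-instance exactly when it satisfies the sentence. *)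

From mathcomp Require Import all_boot.
Set Implicit Arguments.
Unset Strict Implicit.
Unset Printing Implicit Defensive.

(* Input vocabulary: binary edge relation E, unary relation K representing
   the number K (as a set of exactly K elements, K = #|K|), and binary
   successor relation S. *)
Record instance (T : finType) := Instance {
  inE : rel T;
  inK : pred T;
  inS : rel T }.

Definition successor_of_linear_order (T : finType) (S : rel T) : Prop :=
  exists lt : rel T,
    irreflexive lt /\ transitive lt /\
    (forall x y, x != y -> lt x y || lt y x) /\
    (forall x y, S x y <-> (lt x y /\ ~ (exists z, lt x z /\ lt z y))).

Definition valid_instance (T : finType) (A : instance T) : Prop :=
  irreflexive (inE A) /\ symmetric (inE A) /\ successor_of_linear_order (inS A).

Definition is_matching (T : finType) (E : rel T) (F : {set {set T}}) : Prop :=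
  (forall e, e \in F -> exists u v, E u v /\ e = [set u; v]) /\
  (forall e1 e2, e1 \in F -> e2 \in F -> e1 != e2 -> [disjoint e1 & e2]).

Definition max_matching_yes (T : finType) (A : instance T) : Prop :=
  exists F : {set {set T}}, is_matching (inE A) F /\ #|inK A| <= #|F|.

(* m second-order relation variables S_0..S_{m-1} with arities ar i,
   nv first-order (universally quantified) variables x_0..x_{nv-1}. *)
Inductive atom (m : nat) (ar : 'I_m -> nat) (nv : nat) : Type :=
| AtE of 'I_nv & 'I_nv
| AtK of 'I_nv
| AtS of 'I_nv & 'I_nv
| AtEq of 'I_nv & 'I_nv
| AtSO (i : 'I_m) of (ar i).-tuple 'I_nv.

(* a literal: (true, a) is the atom a, (false, a) is its negation *)
Definition literal m (ar : 'I_m -> nat) nv := (bool * atom ar nv)%type.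

(* exists S_0..S_{m-1} forall x_0..x_{nv-1}, /\ of clauses (disjunctions
   of literals) *)
Record eso_sentence := ESOSentence {
  so_num : nat;
  so_arity : 'I_so_num -> nat;
  fo_num : nat;
  matrix : seq (seq (literal so_arity fo_num)) }.

Definition is_SO_atom m (ar : 'I_m -> nat) nv (a : atom ar nv) : bool :=
  if a is AtSO _ _ then true else false.

Definition horn_clause m (ar : 'I_m -> nat) nv (c : seq (literal ar nv)) : bool :=
  count (fun l : literal ar nv => l.1 && is_SO_atom l.2) c <= 1.

Definition universal_horn (phi : eso_sentence) : bool :=
  all (@horn_clause _ _ _) (matrix phi).

Definition atom_holds (T : finType) (A : instance T) m (ar : 'I_m -> nat) nv
    (Sint : forall i : 'I_m, pred ((ar i).-tuple T)) (v : 'I_nv -> T)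
    (a : atom ar nv) : bool :=
  match a with
  | AtE x y => inE A (v x) (v y)
  | AtK x => inK A (v x)
  | AtS x y => inS A (v x) (v y)
  | AtEq x y => v x == v y
  | AtSO i args => Sint i (map_tuple v args)
  end.

Definition literal_holds (T : finType) (A : instance T) m (ar : 'I_m -> nat) nv
    (Sint : forall i : 'I_m, pred ((ar i).-tuple T)) (v : 'I_nv -> T)
    (l : literal ar nv) : bool :=
  if l.1 then atom_holds A Sint v l.2 else ~~ atom_holds A Sint v l.2.

Definition satisfies (T : finType) (A : instance T) (phi : eso_sentence) : Prop :=
  exists Sint : forall i : 'I_(so_num phi), pred ((@so_arity phi i).-tuple T),
    forall v : 'I_(fo_num phi) -> T,
      all (fun c => has (literal_holds A Sint v) c) (matrix phi).

Definition expresses_max_matching (phi : eso_sentence) : Prop :=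
  forall (T : finType) (A : instance T),
    valid_instance A -> (max_matching_yes A <-> satisfies A phi).

(* An ESO universal sentence, Horn or not, is preserved under induced
   substructures: restrict the witnessing second-order relations along the
   embedding.  Maximum Matching is not: the single edge {false, true} with
   K = {true} is a yes-instance, but its substructure induced by {true} (one
   vertex, no edge, K = 1) is a no-instance. *)
From Pilot Require Import Defs.
From mathcomp Require Import all_boot.

Set Implicit Arguments.
Unset Strict Implicit.
Unset Printing Implicit Defensive.

Definition induced_instance (T T' : finType) (A : instance T) (f : T' -> T) :
    instance T' :=
  Instance (fun a b => Defs.inE A (f a) (f b)) (fun a => inK A (f a))
           (fun a b => inS A (f a) (f b)).

Section InducedSubstructure.
Variables (T T' : finType) (A : instance T) (f : T' -> T).
Hypothesis f_inj : injective f.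

Let restrict m (ar : 'I_m -> nat) (Sint : forall i : 'I_m, pred ((ar i).-tuple T)) :
    forall i : 'I_m, pred ((ar i).-tuple T') :=
  fun i t => Sint i (map_tuple f t).

Lemma atom_holds_induced m (ar : 'I_m -> nat) nv
    (Sint : forall i : 'I_m, pred ((ar i).-tuple T)) (v : 'I_nv -> T')
    (a : atom ar nv) :
  atom_holds (induced_instance A f) (restrict Sint) v a
  = atom_holds A Sint (f \o v) a.
Proof.
case: a => [x y|x|x y|x y|i args] //=; first by rewrite (inj_eq f_inj).
by congr (Sint i _); apply: val_inj; rewrite /= map_comp.
Qed.

Lemma literal_holds_induced m (ar : 'I_m -> nat) nv
    (Sint : forall i : 'I_m, pred ((ar i).-tuple T)) (v : 'I_nv -> T')
    (l : literal ar nv) :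
  literal_holds (induced_instance A f) (restrict Sint) v l
  = literal_holds A Sint (f \o v) l.
Proof. by case: l => [[] a]; rewrite /literal_holds /= atom_holds_induced. Qed.

Lemma satisfies_induced (phi : eso_sentence) :
  satisfies A phi -> satisfies (induced_instance A f) phi.
Proof.
case=> Sint sat; exists (restrict Sint) => v.
by rewrite (eq_all (fun c => eq_has (literal_holds_induced Sint v) c)).
Qed.

End InducedSubstructure.

Lemma matching_edgeless (T : finType) (E : rel T) (F : {set {set T}}) :
  E =2 (fun _ _ => false) -> is_matching E F -> F = set0.
Proof.
move=> E0 [edgeF _]; apply/setP => e; rewrite inE.
by apply/negbTE/negP => /edgeF [u [v []]]; rewrite E0.
Qed.

Definition single_edge : instance bool :=
  Instance (fun x y : bool => x != y) (fun x : bool => x)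
           (fun x y : bool => ~~ x && y).

Definition single_vertex : instance unit :=
  induced_instance single_edge (fun _ => true).

Lemma single_edge_valid : valid_instance single_edge.
Proof.
split; first by case.
split; first by move=> x y /=; rewrite eq_sym.
exists (fun x y : bool => ~~ x && y).
split; first by case.
split; first by do 3 case.
split; first by do 2 case.
move=> x y /=; split; last by case.
by move=> lt_xy; split=> // -[z []]; move: lt_xy; case: x; case: y; case: z.
Qed.

Lemma single_vertex_valid : valid_instance single_vertex.
Proof.
do 2 (split; first by []).
exists (fun _ _ : unit => false).
do 3 (split; first by []).
by move=> [] []; split=> // -[].
Qed.

Lemma single_edge_yes : max_matching_yes single_edge.
Proof.
exists [set [set false; true]]; split.
- split=> [e | e1 e2]; rewrite !inE => /eqP ->; first by exists false, true.
  by move=> /eqP ->; rewrite eqxx.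
- by rewrite cards1 (@eq_card1 _ true) //; case.
Qed.

Lemma single_vertex_no : ~ max_matching_yes single_vertex.
Proof.
case=> F [matchF]; rewrite (matching_edgeless _ matchF) // cards0.
by rewrite (@eq_card1 _ tt) //; case.
Qed.

Theorem lemma1 :
  ~ (exists phi : eso_sentence,
        universal_horn phi /\ expresses_max_matching phi).
Proof.
case=> phi [_ phi_expresses].
apply: single_vertex_no; apply/(phi_expresses _ _ single_vertex_valid).
apply: satisfies_induced; first by do 2 case.
exact/(phi_expresses _ _ single_edge_valid)/single_edge_yes.
Qed.
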